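(* In the setting below, assume that (I) $g$ is self-reciprocal, (II) $l$ is self-reciprocal, (III) $\gcd(t_{22},g_{12})=1$, and (IV) $\gcd\big(r_{22},\ g_{11}\bar g_{11}+g_{12}\bar g_{12}\big)=1$. Then for every irreducible factor $h_j$ of $x^m-1$ that is not self-reciprocal, the constituents satisfy $C_j'\cap (C_j'')^{\perp_e}=\{\mathbf 0\}$ and $C_j''\cap (C_j')^{\perp_e}=\{\mathbf 0\}$.
   Context: Let $q$ be a prime power, $F=\mathbb{F}_q$, $m\ge1$ with $\gcd(q,m)=1$. For a nonzero polynomial $f$ of degree $k$, $f^*(x)=x^kf(x^{-1})$; $f$ is self-reciprocal if $f^*=\alpha f$ for some $\alpha\in F$. For a polynomial $f$ of degree at most $m$, $\bar f(x)=x^m f(x^{-1})$. Let $g_{11},g_{12},g_{22}\in F[x]$ satisfy $g_{11}\mid x^m-1$, $g_{22}\mid x^m-1$, $\deg g_{12}<\deg g_{22}$, $g_{11}g_{22}\mid (x^m-1)g_{12}$ (these generate the quasi-cyclic code $C=\langle (g_{11},g_{12}),(0,g_{22})\rangle\subseteq (F[x]/\langle x^m-1\rangle)^2$). Define $g=\gcd(g_{11},g_{22})$, $l=(x^m-1)/\mathrm{lcm}(g_{11},g_{22})$, $g_{11}=g\,g_{11}'$, $g_{22}=g\,g_{22}'$, $r_{22}=\gcd(g_{22}',g_{22}'^* )$, $t_{22}=g_{22}'/r_{22}$. Let $\xi$ be a primitive $m$-th root of unity in an extension of $F$. Let $h_j$ be an irreducible factor of $x^m-1$ over $F$ that is not self-reciprocal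 (so $h_j^*$ is, up to a scalar, a different irreducible factor), and let $\xi^{v_j}$ be a root of $h_j$; let $K_j=F(\xi^{v_j})$. The constituent $C_j'\subseteq K_j^2$ is the $K_j$-span of the rows $(g_{11}(\xi^{v_j}),g_{12}(\xi^{v_j}))$, $(0,g_{22}(\xi^{v_j}))$, and the constituent $C_j''\subseteq K_j^2$ is the $K_j$-span of the rows $(\bar g_{11}(\xi^{v_j}),\bar g_{12}(\xi^{v_j}))$, $(0,\bar g_{22}(\xi^{v_j}))$. For $D\subseteq K_j^2$, $D^{\perp_e}$ is its dual with respect to the standard bilinear form $c_1d_1+c_2d_2$. *)

From HB Require Import structures.
From mathcomp Require Import all_boot all_order all_algebra all_field.
Set Implicit Arguments. Unset Strict Implicit. Unset Printing Implicit Defensive.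
Import GRing.Theory.
Local Open Scope ring_scope.

(* Reciprocal f^*(x) = x^(deg f) f(1/x): coefficient i is f_(deg f - i). *)
Definition recip (F : fieldType) (f : {poly F}) : {poly F} :=
  \poly_(i < size f) f`_((size f).-1 - i).

Definition self_reciprocal (F : fieldType) (f : {poly F}) : Prop :=
  f != 0 /\ exists alpha : F, recip f = alpha *: f.

(* bar f(x) = x^m f(1/x), for deg f <= m: coefficient i is f_(m - i). *)
Definition polybar (F : fieldType) (m : nat) (f : {poly F}) : {poly F} :=
  \poly_(i < m.+1) f`_(m - i).

Definition lcmpoly (F : fieldType) (a b : {poly F}) : {poly F} :=
  (a * b) %/ gcdp a b.

Definition evalL (F : fieldType) (L : fieldExtType F) (p : {poly F}) (z : L) : L :=
  (map_poly (in_alg L) p).[z].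

(* K-span in K^2 (K a subfield of L, vectors represented in L * L) of two rows. *)
Definition span2 (F : fieldType) (L : fieldExtType F) (K : {vspace L})
  (r1 r2 : L * L) : L * L -> Prop :=
  fun c => exists a b : L, [/\ a \in K, b \in K &
     c = (a * r1.1 + b * r2.1, a * r1.2 + b * r2.2)].

Definition edual2 (F : fieldType) (L : fieldExtType F) (K : {vspace L})
  (D : L * L -> Prop) : L * L -> Prop :=
  fun c => [/\ c.1 \in K, c.2 \in K &
     forall d, D d -> c.1 * d.1 + c.2 * d.2 = 0].

From HB Require Import structures.
From mathcomp Require Import all_boot all_order all_algebra all_field.
Set Implicit Arguments. Unset Strict Implicit. Unset Printing Implicit Defensive.
Import GRing.Theory.
Local Open Scope ring_scope.

(* At an m-th root of unity u, the rows spanning C_j'' are those spanning C_j'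
   evaluated at u^-1 instead of u, since bar f(u) = u^m f(u^-1) = f(u^-1).  A
   vector of span{(a, b), (0, c)} orthogonal to (a', b') and (0, c') vanishes
   as soon as one of a few nonvanishing patterns holds, and a case analysis on
   whether g11 and g22 vanish at u produces one of them.  Separability of
   x^m - 1 = l g11 g22' makes l(u) = 0 exactly when g11(u) and g22(u) are both
   nonzero; self-reciprocity of g and l transports (non)vanishing between u and
   u^-1; and coprimality of t22, resp. r22, supplies g12(u) <> 0, resp.
   g11(u) g11(u^-1) + g12(u) g12(u^-1) <> 0, when g22 vanishes at only one,
   resp. both, of u and u^-1. *)

Lemma natr_neq0_coprime_card (F : finFieldType) (m : nat) :
  coprime #|F| m -> m%:R != 0 :> F.
Proof.
move=> coFm; have [p p_pr pchFp] := finPcharP F.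
have cardF := card_pprimeChar pchFp.
have n_gt0 : (0 < logn p #|F|)%N.
  by have := card_finNzRing_gt1 F; rewrite {1}cardF; case: (logn p _).
by rewrite -(dvdn_pcharf pchFp) -prime_coprime // -(coprime_pexpl _ _ n_gt0) -cardF.
Qed.

Section Evaluation.
Variables (F : fieldType) (L : fieldExtType F).
Implicit Types (p q d : {poly F}) (u : L).

Lemma evalLM p q u : evalL (p * q) u = evalL p u * evalL q u.
Proof. by rewrite /evalL rmorphM hornerM. Qed.

Lemma evalLD p q u : evalL (p + q) u = evalL p u + evalL q u.
Proof. by rewrite /evalL rmorphD hornerD. Qed.

Lemma evalLZ c p u : evalL (c *: p) u = c%:A * evalL p u.
Proof. by rewrite /evalL map_polyZ hornerZ mulr_algl. Qed.

Lemma evalL_dvdp_eq0 d p u : d %| p -> evalL d u = 0 -> evalL p u = 0.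
Proof. by move/divpK=> <- du0; rewrite evalLM du0 mulr0. Qed.

Lemma evalL_coprimep_neq0 p q u :
  coprimep p q -> evalL p u = 0 -> evalL q u != 0.
Proof.
rewrite -(coprimep_map (in_alg L)) => pq_coprime pu0.
by apply: coprimep_root pq_coprime _; apply/eqP.
Qed.

Lemma evalL_gcdp_eq0 p q u :
  (evalL (gcdp p q) u == 0) = (evalL p u == 0) && (evalL q u == 0).
Proof. by rewrite /evalL gcdp_map; apply: root_gcd. Qed.

Lemma evalL_polybar n p u : u != 0 -> (size p <= n.+1)%N ->
  evalL (polybar n p) u = u ^+ n * evalL p u^-1.
Proof.
move=> u0 size_p.
rewrite /evalL !(@horner_coef_wide _ n.+1) ?size_map_poly ?size_poly //.
rewrite big_distrr (reindex_inj rev_ord_inj) /=; apply: eq_bigr => i _.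
have le_i_n : (i <= n)%N by rewrite -ltnS.
rewrite !coef_map /= coef_poly subSS ltnS leq_subr subKn // mulrCA.
by rewrite exprVn (expfB_cond (m:=n)) ?(negPf u0) // mulrC.
Qed.

Lemma evalL_recip p u : u != 0 ->
  evalL (recip p) u = u ^+ (size p).-1 * evalL p u^-1.
Proof.
move=> u0; have [->|p0] := eqVneq p 0.
  have -> : recip 0 = 0 :> {poly F}.
    by apply/polyP=> i; rewrite coef_poly !coef0 if_same.
  by rewrite /evalL !map_poly0 !horner0 mulr0.
have size_p : (size p).-1.+1 = size p by rewrite prednK ?size_poly_gt0.
by rewrite -evalL_polybar ?size_p // /polybar size_p.
Qed.

Lemma evalL_recip_eq0 p u : u != 0 ->
  (evalL (recip p) u == 0) = (evalL p u^-1 == 0).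
Proof. by move=> u0; rewrite evalL_recip // mulf_eq0 expf_eq0 (negPf u0) andbF. Qed.

Lemma self_reciprocal_evalL_eq0 p u : self_reciprocal p -> u != 0 ->
  (evalL p u^-1 == 0) = (evalL p u == 0).
Proof.
move=> [p0 [c recip_p]] u0.
have c0 : c != 0.
  apply: contraTneq (p0) => c0; move/(congr1 (coefp 0)): recip_p.
  rewrite c0 scale0r /= coef_poly size_poly_gt0 p0 subn0 coef0 -lead_coefE.
  by move/eqP; rewrite lead_coef_eq0 (negPf p0).
by rewrite -(evalL_recip_eq0 p u0) recip_p evalLZ mulf_eq0 scaler_eq0 oner_eq0 (negPf c0).
Qed.

End Evaluation.

Section Pairing.
Variables (F : fieldType) (L : fieldExtType F) (K : {vspace L}).
Variables (a b c a' b' c' : L).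
Hypothesis K1 : 1 \in K.

Lemma span2_edual2P v :
  span2 K (a, b) (0, c) v -> edual2 K (span2 K (a', b') (0, c')) v ->
  exists x y, [/\ v = (x * a, x * b + y * c),
                  v.1 * a' + v.2 * b' = 0 & v.2 * c' = 0].
Proof.
move=> [x [y [_ _ ->]]] [_ _ /= orth]; exists x, y.
rewrite mulr0 addr0 in orth *; split=> //.
  by apply: (orth (a', b')); exists 1, 0; rewrite mem0v !mul1r !mul0r !addr0.
have := orth (0, c'); rewrite /= mulr0 add0r; apply.
by exists 0, 1; rewrite mem0v !mul1r !mul0r !add0r.
Qed.

Lemma span2_edual2_eq0_of_c' : c' != 0 -> a = 0 \/ a' != 0 ->
  forall v, span2 K (a, b) (0, c) v -> edual2 K (span2 K (a', b') (0, c')) v ->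
  v = (0, 0).
Proof.
move=> c'0 a_a' v Cv Dv; have [x [y [-> /= orth1 orth2]]] := span2_edual2P Cv Dv.
have v2 : x * b + y * c = 0.
  by apply/eqP; move/eqP: orth2; rewrite mulf_eq0 (negPf c'0) orbF.
rewrite v2 mul0r addr0 in orth1 *.
case: a_a' => [-> | a'0]; first by rewrite mulr0.
by move/eqP: orth1; rewrite mulf_eq0 (negPf a'0) orbF => /eqP ->.
Qed.

Lemma span2_edual2_eq0_of_a : a = 0 -> b' != 0 \/ c' != 0 ->
  forall v, span2 K (a, b) (0, c) v -> edual2 K (span2 K (a', b') (0, c')) v ->
  v = (0, 0).
Proof.
move=> a0 b'_c' v Cv Dv; have [x [y [-> /= orth1 orth2]]] := span2_edual2P Cv Dv.
rewrite a0 mulr0 mul0r add0r in orth1 *; congr (_, _); apply/eqP.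
case: b'_c' => [b'0 | c'0]; [move/eqP: orth1 | move/eqP: orth2].
  by rewrite mulf_eq0 (negPf b'0) orbF.
by rewrite mulf_eq0 (negPf c'0) orbF.
Qed.

Lemma span2_edual2_eq0_of_c : c = 0 -> a * a' + b * b' != 0 \/ b * c' != 0 ->
  forall v, span2 K (a, b) (0, c) v -> edual2 K (span2 K (a', b') (0, c')) v ->
  v = (0, 0).
Proof.
move=> c0 ab_bc v Cv Dv; have [x [y [-> /= orth1 orth2]]] := span2_edual2P Cv Dv.
suff -> : x = 0 by rewrite c0 !mul0r mulr0 addr0.
case: ab_bc => [ab0 | bc0]; apply/eqP.
  by move/eqP: orth1; rewrite c0 mulr0 addr0 -!mulrA -mulrDr mulf_eq0 (negPf ab0) orbF.
by move/eqP: orth2; rewrite c0 mulr0 addr0 -mulrA mulf_eq0 (negPf bc0) orbF.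
Qed.

End Pairing.

Section Constituents.
Variables (F : fieldType) (m : nat) (g11 g12 g22 : {poly F}).

Local Notation P := ('X^m - 1 : {poly F}).
Local Notation g := (gcdp g11 g22).
Local Notation g22' := (g22 %/ g).
Local Notation l := (P %/ lcmpoly g11 g22).
Local Notation r22 := (gcdp g22' (recip g22')).
Local Notation t22 := (g22' %/ r22).

Hypotheses (m_gt0 : (0 < m)%N) (Xn_sub1_sep : separable_poly P).
Hypotheses (g11_dvd : g11 %| P) (g22_dvd : g22 %| P).
Hypotheses (size_g12 : (size g12 < size g22)%N) (g11g22_dvd : g11 * g22 %| P * g12).
Hypotheses (g_selfrec : self_reciprocal g) (l_selfrec : self_reciprocal l).
Hypothesis coprime_t22_g12 : coprimep t22 g12.
Hypothesis coprime_r22 : coprimep r22 (g11 * polybar m g11 + g12 * polybar m g12).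

Lemma Xn_sub1_neq0 : P != 0.
Proof. exact: monic_neq0 (monicXnsubC 1 m_gt0). Qed.

Lemma size_dvdp_Xn_sub1 f : f %| P -> (size f <= m.+1)%N.
Proof. by move=> f_dvd; rewrite -(size_XnsubC (1 : F) m_gt0) dvdp_leq ?Xn_sub1_neq0. Qed.

Lemma size_g12_le : (size g12 <= m.+1)%N.
Proof. exact: leq_trans (ltnW size_g12) (size_dvdp_Xn_sub1 g22_dvd). Qed.

Lemma gcd_neq0 : g != 0.
Proof.
rewrite gcdp_eq0 negb_and; apply/orP; left.
by apply: contraTneq g11_dvd => ->; rewrite dvd0p Xn_sub1_neq0.
Qed.

Lemma coprimep_g11_g22' : coprimep g11 g22'.
Proof.
have g22'_g : coprimep g22' g.
  have := dvdp_separable g22_dvd Xn_sub1_sep.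
  by rewrite -{1}(divpK (dvdp_gcdr g11 g22)) separable_mul => /and3P[].
rewrite -[X in coprimep X _](divpK (dvdp_gcdl g11 g22)) coprimepMl.
rewrite [coprimep g _]coprimep_sym g22'_g andbT.
by rewrite coprimep_div_gcd // -negb_and -gcdp_eq0 gcd_neq0.
Qed.

Lemma Xn_sub1_factor : P = l * (g11 * g22').
Proof.
have -> : lcmpoly g11 g22 = g11 * g22'.
  by rewrite /lcmpoly -{1}(divpK (dvdp_gcdr g11 g22)) mulrA mulpK ?gcd_neq0.
rewrite divpK // Gauss_dvdp ?coprimep_g11_g22' // g11_dvd /=.
by apply: dvdp_trans g22_dvd; rewrite -[X in _ %| X](divpK (dvdp_gcdr g11 g22)) dvdp_mulr.
Qed.

Lemma gcd_dvd_g12 : g %| g12.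
Proof.
have P_eq : P = P %/ g * g by rewrite divpK // (dvdp_trans (dvdp_gcdl _ _) g11_dvd).
have g_coprime : coprimep g (P %/ g).
  by move: Xn_sub1_sep; rewrite {1}P_eq separable_mul coprimep_sym => /and3P[].
rewrite -(Gauss_dvdpr _ g_coprime) -(dvdp_mul2l _ _ gcd_neq0).
apply: dvdp_trans (dvdp_mul (dvdp_gcdl g11 g22) (dvdp_gcdr g11 g22)) _.
by apply: dvdp_trans g11g22_dvd _; rewrite {1}P_eq mulrAC mulrC.
Qed.

Variable L : fieldExtType F.
Implicit Types u : L.

Lemma unity_neq0 u : u ^+ m = 1 -> u != 0.
Proof.
by move=> um; apply: contra_eq_neq um => ->; rewrite expr0n gtn_eqF // eq_sym oner_eq0.
Qed.

Lemma evalL_polybar_unity (f : {poly F}) u : u ^+ m = 1 -> (size f <= m.+1)%N ->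
  evalL (polybar m f) u = evalL f u^-1.
Proof. by move=> um f_size; rewrite evalL_polybar ?unity_neq0 // um mul1r. Qed.

Lemma evalL_l_eq0 u : u ^+ m = 1 ->
  (evalL l u == 0) = (evalL g11 u != 0) && (evalL g22 u != 0).
Proof.
move=> um; have P_u : evalL P u = 0.
  by rewrite /evalL rmorphB /= map_polyXn rmorph1 !hornerE um subrr.
have g22_u : evalL g22 u = evalL g22' u * evalL g u.
  by rewrite -evalLM divpK // dvdp_gcdr.
have l_coprime : coprimep l (g11 * g22').
  by move: Xn_sub1_sep; rewrite {1}Xn_sub1_factor separable_mul => /and3P[].
apply/idP/andP => [/eqP l_u | [g11_u g22_u']].
  have := evalL_coprimep_neq0 l_coprime l_u.
  rewrite evalLM mulf_eq0 negb_or => /andP[g11_u g22'_u]; split=> //.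
  by rewrite g22_u mulf_neq0 // evalL_gcdp_eq0 (negbTE g11_u).
move: P_u; rewrite {1}Xn_sub1_factor !evalLM => /eqP; rewrite !mulf_eq0 (negbTE g11_u) /=.
by case/orP=> // /eqP g22'_u; move: g22_u'; rewrite g22_u g22'_u mul0r eqxx.
Qed.

Lemma evalL_g22'_eq0 u : evalL g u != 0 -> (evalL g22' u == 0) = (evalL g22 u == 0).
Proof.
move=> g_u; rewrite -[X in _ = (evalL X u == 0)](divpK (dvdp_gcdr g11 g22)).
by rewrite evalLM mulf_eq0 (negbTE g_u) orbF.
Qed.

Lemma evalL_g12_neq0 u : u != 0 ->
  evalL g22' u = 0 -> evalL g22' u^-1 != 0 -> evalL g12 u != 0.
Proof.
move=> u0 g22'_u g22'_u'.
have r22_u : evalL r22 u != 0.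
  apply: contra g22'_u' => /eqP r22_u; rewrite -(evalL_recip_eq0 _ u0).
  by rewrite (evalL_dvdp_eq0 (dvdp_gcdr _ _) r22_u).
have t22_u : evalL t22 u = 0.
  apply/eqP; move/eqP: g22'_u; rewrite -{1}(divpK (dvdp_gcdl g22' (recip g22'))).
  by rewrite evalLM mulf_eq0 (negbTE r22_u) orbF.
exact: evalL_coprimep_neq0 coprime_t22_g12 t22_u.
Qed.

Lemma evalL_rows_pairing_neq0 u : u ^+ m = 1 ->
  evalL g22' u = 0 -> evalL g22' u^-1 = 0 ->
  evalL g11 u * evalL g11 u^-1 + evalL g12 u * evalL g12 u^-1 != 0.
Proof.
move=> um g22'_u g22'_u'.
have r22_u : evalL r22 u = 0.
  apply/eqP; rewrite evalL_gcdp_eq0 (evalL_recip_eq0 _ (unity_neq0 um)).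
  by rewrite g22'_u g22'_u' eqxx.
have := evalL_coprimep_neq0 coprime_r22 r22_u.
by rewrite evalLD !evalLM !evalL_polybar_unity ?size_g12_le ?size_dvdp_Xn_sub1.
Qed.

Lemma rows_meet_edual2_eq0 (K : {vspace L}) u : 1 \in K -> u ^+ m = 1 ->
  forall v, span2 K (evalL g11 u, evalL g12 u) (0, evalL g22 u) v ->
  edual2 K (span2 K (evalL g11 u^-1, evalL g12 u^-1) (0, evalL g22 u^-1)) v ->
  v = (0, 0).
Proof.
move=> K1 um; have u0 := unity_neq0 um.
have g_sym := self_reciprocal_evalL_eq0 g_selfrec u0.
have l_sym := self_reciprocal_evalL_eq0 l_selfrec u0.
have u'm : u^-1 ^+ m = 1 by rewrite exprVn um invr1.
have [g11_u|g11_u] := eqVneq (evalL g11 u) 0;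
  have [g22_u|g22_u] := eqVneq (evalL g22 u) 0.
- have g_u : evalL g u = 0 by apply/eqP; rewrite evalL_gcdp_eq0 g11_u g22_u eqxx.
  rewrite g11_u g22_u (evalL_dvdp_eq0 gcd_dvd_g12 g_u) => v [x [y [_ _ ->]]].
  by rewrite !mulr0 addr0.
- have g_u : evalL g u != 0 by rewrite evalL_gcdp_eq0 (negbTE g22_u) andbF.
  have g_u' : evalL g u^-1 != 0 by rewrite g_sym.
  have l_u' : evalL l u^-1 != 0 by rewrite l_sym evalL_l_eq0 // g11_u eqxx.
  have [g11_u'|g11_u'] := eqVneq (evalL g11 u^-1) 0.
    apply: span2_edual2_eq0_of_c'; [done | | by left].
    by move: g_u'; rewrite evalL_gcdp_eq0 g11_u' eqxx.
  have g22_u' : evalL g22 u^-1 = 0.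
    by apply/eqP; move: l_u'; rewrite evalL_l_eq0 // g11_u' negbK.
  apply: span2_edual2_eq0_of_a => //; left; apply: evalL_g12_neq0.
  + by rewrite invr_eq0.
  + by apply/eqP; rewrite evalL_g22'_eq0 // g22_u'.
  + by rewrite invrK evalL_g22'_eq0.
- have g_u : evalL g u != 0 by rewrite evalL_gcdp_eq0 (negbTE g11_u).
  have g_u' : evalL g u^-1 != 0 by rewrite g_sym.
  have g22'_u : evalL g22' u = 0 by apply/eqP; rewrite evalL_g22'_eq0 // g22_u.
  apply: span2_edual2_eq0_of_c => //.
  have [g22_u'|g22_u'] := eqVneq (evalL g22 u^-1) 0; [left | right].
    by apply: evalL_rows_pairing_neq0 => //; apply/eqP; rewrite evalL_g22'_eq0 // g22_u'.
  by rewrite mulf_neq0 // evalL_g12_neq0 // evalL_g22'_eq0.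
- have l_u' : evalL l u^-1 == 0 by rewrite l_sym evalL_l_eq0 // g11_u g22_u.
  rewrite evalL_l_eq0 // in l_u'; case/andP: l_u' => g11_u' g22_u'.
  by apply: span2_edual2_eq0_of_c' => //; right.
Qed.

Lemma constituents_meet_edual2_eq0 (K : {vspace L}) z : 1 \in K -> z ^+ m = 1 ->
  let C1 := span2 K (evalL g11 z, evalL g12 z) (0, evalL g22 z) in
  let C2 := span2 K (evalL (polybar m g11) z, evalL (polybar m g12) z)
                    (0, evalL (polybar m g22) z) in
  (forall c, C1 c -> edual2 K C2 c -> c = (0, 0)) /\
  (forall c, C2 c -> edual2 K C1 c -> c = (0, 0)).
Proof.
move=> K1 zm C1 C2.
have C2E : C2 = span2 K (evalL g11 z^-1, evalL g12 z^-1) (0, evalL g22 z^-1).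
  by rewrite /C2 !evalL_polybar_unity ?size_g12_le ?size_dvdp_Xn_sub1.
rewrite C2E; split; first exact: rows_meet_edual2_eq0.
have := rows_meet_edual2_eq0 K1 (_ : z^-1 ^+ m = 1); rewrite invrK; apply.
by rewrite exprVn zm invr1.
Qed.

End Constituents.

Theorem lemma3p7 (F : finFieldType) (m : nat) (g11 g12 g22 : {poly F})
  (Hm : (0 < m)%N) (Hqm : coprime #|F| m)
  (H11 : g11 %| 'X^m - 1) (H22 : g22 %| 'X^m - 1)
  (H12 : (size g12 < size g22)%N)
  (Hdiv : g11 * g22 %| ('X^m - 1) * g12) :
  let g := gcdp g11 g22 in
  let l := ('X^m - 1) %/ lcmpoly g11 g22 in
  let g11' := g11 %/ g in
  let g22' := g22 %/ g in
  let r22 := gcdp g22' (recip g22') in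
  let t22 := g22' %/ r22 in
  self_reciprocal g ->
  self_reciprocal l ->
  coprimep t22 g12 ->
  coprimep r22 (g11 * polybar m g11 + g12 * polybar m g12) ->
  forall (L : fieldExtType F) (xi : L), m.-primitive_root xi ->
  forall (h : {poly F}) (v : nat),
    irreducible_poly h -> h %| 'X^m - 1 -> ~ self_reciprocal h ->
    root (map_poly (in_alg L) h) (xi ^+ v) ->
  let z := xi ^+ v in
  let K := <<1%VS; z>>%VS in
  let C1 := span2 K (evalL g11 z, evalL g12 z) (0, evalL g22 z) in
  let C2 := span2 K (evalL (polybar m g11) z, evalL (polybar m g12) z)
                    (0, evalL (polybar m g22) z) in
  (forall c, C1 c -> edual2 K C2 c -> c = (0, 0)) /\
  (forall c, C2 c -> edual2 K C1 c -> c = (0, 0)).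
Proof.
move=> g l g11' g22' r22 t22 g_selfrec l_selfrec t22_coprime r22_coprime.
move=> L xi xi_prim h v _ _ _ _ z K.
have sep : separable_poly ('X^m - 1 : {poly F}).
  exact: separable_Xn_sub_1 (natr_neq0_coprime_card Hqm).
have K1 : 1 \in K by rewrite (subvP (subv_adjoin _ z)) ?memv_line.
have zm : z ^+ m = 1 by rewrite /z exprAC (prim_expr_order xi_prim) expr1n.
exact: constituents_meet_edual2_eq0.
Qed.
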